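(* Let $c\ge 0$, $R>0$, $R\neq c$, and let $\mathcal{C}:x^2+y^2=R^2$. Let $\mathcal{D}$ be the ellipse $\frac{x^2}{(R^2+c^2)^2/(4R^2)}+\frac{y^2}{(R^2-c^2)^2/(4R^2)}=1$, which is centered at the origin with foci $(\pm c,0)$. Suppose some nondegenerate triangle inscribed in $\mathcal{C}$ is circumscribed about $\mathcal{D}$, and let $\mathcal{P}$ be the family of all such triangles. Then for every $\triangle ABC\in\mathcal{P}$, the three vertices of the tangential triangle of $\triangle ABC$ lie on the fixed ellipse $$\frac{x^2}{\frac{4R^6}{(R^2+c^2)^2}}+\frac{y^2}{\frac{4R^6}{(R^2-c^2)^2}}=1,$$ which is centered at the center of $\mathcal{D}$.
   Context: A triangle is circumscribed about a conic if each of its three sidelines is tangent to the conic. The tangential triangle of a non-right triangle $ABC$ is the triangle formed by the tangent lines to the circumcircle of $\triangle ABC$ at $A$, $B$, $C$. *)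

From Stdlib Require Import Reals Lra.
Open Scope R_scope.

Definition point := (R * R)%type.

Definition on_circle (r : R) (P : point) : Prop :=
  fst P ^ 2 + snd P ^ 2 = r ^ 2.

Definition on_ellipse (a2 b2 : R) (P : point) : Prop :=
  fst P ^ 2 / a2 + snd P ^ 2 / b2 = 1.

Definition on_line (A B P : point) : Prop :=
  exists t : R, P = (fst A + t * (fst B - fst A), snd A + t * (snd B - snd A)).

Definition line_tangent_ellipse (a2 b2 : R) (A B : point) : Prop :=
  exists! P : point, on_line A B P /\ on_ellipse a2 b2 P.

Definition nondegenerate (A B C : point) : Prop :=
  (fst B - fst A) * (snd C - snd A) - (snd B - snd A) * (fst C - fst A) <> 0.

Definition on_circle_tangent (A P : point) : Prop :=
  (fst P - fst A) * fst A + (snd P - snd A) * snd A = 0.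

Definition on_D (c r : R) (P : point) : Prop :=
  on_ellipse ((r ^ 2 + c ^ 2) ^ 2 / (4 * r ^ 2)) ((r ^ 2 - c ^ 2) ^ 2 / (4 * r ^ 2)) P.

Definition in_family (c r : R) (A B C : point) : Prop :=
  nondegenerate A B C /\
  on_circle r A /\ on_circle r B /\ on_circle r C /\
  line_tangent_ellipse ((r ^ 2 + c ^ 2) ^ 2 / (4 * r ^ 2)) ((r ^ 2 - c ^ 2) ^ 2 / (4 * r ^ 2)) B C /\
  line_tangent_ellipse ((r ^ 2 + c ^ 2) ^ 2 / (4 * r ^ 2)) ((r ^ 2 - c ^ 2) ^ 2 / (4 * r ^ 2)) C A /\
  line_tangent_ellipse ((r ^ 2 + c ^ 2) ^ 2 / (4 * r ^ 2)) ((r ^ 2 - c ^ 2) ^ 2 / (4 * r ^ 2)) A B.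

Definition on_E (c r : R) (P : point) : Prop :=
  on_ellipse (4 * r ^ 6 / (r ^ 2 + c ^ 2) ^ 2) (4 * r ^ 6 / (r ^ 2 - c ^ 2) ^ 2) P.

From Stdlib Require Import Reals Lra.
Open Scope R_scope.

(* The tangential triangle of ABC has as vertices the poles of its sides with
   respect to the circle x^2 + y^2 = r^2: the tangents at X and Y meet at the
   point T with T.X = T.Y = r^2, so the chord XY is the line (T / r^2).P = 1.
   A line u.P = 1 touches the ellipse x^2/a2 + y^2/b2 = 1 exactly when
   a2 u1^2 + b2 u2^2 = 1, hence every such pole lies on the polar reciprocal
   ellipse a2 T1^2 + b2 T2^2 = r^4, whose squared semi-axes r^4/a2 and r^4/b2
   are those of the ellipse E. *)

Lemma ellipse_eq_iff (a2 b2 x y : R) : 0 < a2 -> 0 < b2 ->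
  (x ^ 2 / a2 + y ^ 2 / b2 = 1 <-> b2 * x ^ 2 + a2 * y ^ 2 = a2 * b2).
Proof.
  intros ha hb.
  replace (x ^ 2 / a2 + y ^ 2 / b2) with ((b2 * x ^ 2 + a2 * y ^ 2) / (a2 * b2))
    by (field; lra).
  split; intro H.
  - apply (Rmult_eq_compat_r (a2 * b2)) in H. field_simplify in H; lra.
  - rewrite H. field. lra.
Qed.

(* The two roots of a quadratic sum to [- b / a]. *)
Lemma quadratic_unique_root_discr (a b g t0 : R) : a <> 0 ->
  a * t0 ^ 2 + b * t0 + g = 0 ->
  (forall t, a * t ^ 2 + b * t + g = 0 -> t = t0) ->
  b ^ 2 - 4 * a * g = 0.
Proof.
  intros ha h0 huniq.
  assert (hb : - b / a - t0 = t0).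
  { apply huniq. rewrite <- h0. field. exact ha. }
  assert (hb' : b = - 2 * a * t0).
  { replace b with (- a * (- b / a)) by (field; exact ha). nra. }
  assert (hg : g = a * t0 ^ 2) by (subst b; nra).
  subst b g. ring.
Qed.

Lemma nondegenerate_neq (A B C : point) :
  nondegenerate A B C -> A <> B /\ B <> C /\ C <> A.
Proof.
  intro hnd; repeat split; intro e; subst; apply hnd; ring.
Qed.

Lemma line_param_inj (x1 x2 d1 d2 t s : R) : d1 <> 0 \/ d2 <> 0 ->
  (x1 + t * d1, x2 + t * d2) = (x1 + s * d1, x2 + s * d2) -> t = s.
Proof.
  intros [hd|hd] e; injection e as e1 e2.
  - apply (Rmult_eq_reg_r d1); [lra | exact hd].
  - apply (Rmult_eq_reg_r d2); [lra | exact hd].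
Qed.

Lemma line_tangent_ellipse_discr (a2 b2 : R) (X Y : point) :
  0 < a2 -> 0 < b2 -> X <> Y -> line_tangent_ellipse a2 b2 X Y ->
  a2 * (snd Y - snd X) ^ 2 + b2 * (fst Y - fst X) ^ 2 =
  (fst X * (snd Y - snd X) - snd X * (fst Y - fst X)) ^ 2.
Proof.
  destruct X as [x1 x2], Y as [y1 y2]; cbn [fst snd].
  intros ha hb hXY [P [[[t0 ->] HP] Huniq]].
  set (d1 := y1 - x1) in *; set (d2 := y2 - x2) in *.
  assert (hd : d1 <> 0 \/ d2 <> 0).
  { destruct (Req_dec d1 0); [right | now left].
    intro; apply hXY; unfold d1, d2 in *; f_equal; lra. }
  set (qa := b2 * d1 ^ 2 + a2 * d2 ^ 2).
  set (qb := 2 * (b2 * x1 * d1 + a2 * x2 * d2)).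
  set (qg := b2 * x1 ^ 2 + a2 * x2 ^ 2 - a2 * b2).
  assert (hqa : 0 < qa).
  { destruct hd as [hd|hd]; pose proof (Rsqr_pos_lt _ hd); unfold qa, Rsqr in *; nra. }
  assert (hq : forall t, on_ellipse a2 b2 (x1 + t * d1, x2 + t * d2) <->
                         qa * t ^ 2 + qb * t + qg = 0).
  { intro t; unfold on_ellipse; cbn [fst snd].
    rewrite (ellipse_eq_iff _ _ _ _ ha hb); unfold qa, qb, qg; split; intro; nra. }
  assert (hdiscr : qb ^ 2 - 4 * qa * qg = 0).
  { apply (quadratic_unique_root_discr qa qb qg t0); [lra | now apply hq |].
    intros t ht; symmetry; apply (line_param_inj x1 x2 d1 d2 _ _ hd), Huniq.
    split; [now exists t | now apply hq]. }
  assert (hab : 0 < 4 * a2 * b2) by nra.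
  replace (qb ^ 2 - 4 * qa * qg) with
    (4 * a2 * b2 * (a2 * d2 ^ 2 + b2 * d1 ^ 2 - (x1 * d2 - x2 * d1) ^ 2)) in hdiscr
    by (unfold qa, qb, qg; ring).
  apply Rmult_integral in hdiscr as [|]; lra.
Qed.

(* The tangents at X and Y give T.X = T.Y = r^2; Cramer's rule solves this system for T. *)
Lemma circle_tangents_meet (r : R) (X Y T : point) :
  r <> 0 -> X <> Y -> on_circle r X -> on_circle r Y ->
  on_circle_tangent X T -> on_circle_tangent Y T ->
  fst X * (snd Y - snd X) - snd X * (fst Y - fst X) <> 0 /\
  (fst X * (snd Y - snd X) - snd X * (fst Y - fst X)) * fst T = r ^ 2 * (snd Y - snd X) /\
  (fst X * (snd Y - snd X) - snd X * (fst Y - fst X)) * snd T = - r ^ 2 * (fst Y - fst X).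
Proof.
  destruct X as [x1 x2], Y as [y1 y2], T as [t1 t2].
  unfold on_circle, on_circle_tangent; cbn [fst snd].
  intros hr hXY hX hY hTX hTY.
  assert (hTx : t1 * x1 + t2 * x2 = r ^ 2) by lra.
  assert (hTd : t1 * (y1 - x1) + t2 * (y2 - x2) = 0) by lra.
  assert (k1 : (x1 * (y2 - x2) - x2 * (y1 - x1)) * t1 = r ^ 2 * (y2 - x2)).
  { rewrite <- hTx; transitivity ((y2 - x2) * (t1 * x1 + t2 * x2) - x2 * 0); [rewrite <- hTd |]; ring. }
  assert (k2 : (x1 * (y2 - x2) - x2 * (y1 - x1)) * t2 = - r ^ 2 * (y1 - x1)).
  { rewrite <- hTx; transitivity (- (y1 - x1) * (t1 * x1 + t2 * x2) + x1 * 0); [rewrite <- hTd |]; ring. }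
  repeat split; auto.
  intro hk; rewrite hk in k1, k2; apply hXY.
  assert (hr2 : r ^ 2 <> 0) by now apply pow_nonzero.
  assert (e2 : y2 - x2 = 0) by (apply (Rmult_eq_reg_l (r ^ 2)); lra).
  assert (e1 : y1 - x1 = 0) by (apply (Rmult_eq_reg_l (r ^ 2)); lra).
  f_equal; lra.
Qed.

Lemma pole_on_reciprocal_ellipse (a2 b2 r : R) (X Y T : point) :
  0 < a2 -> 0 < b2 -> r <> 0 -> X <> Y -> on_circle r X -> on_circle r Y ->
  line_tangent_ellipse a2 b2 X Y ->
  on_circle_tangent X T -> on_circle_tangent Y T ->
  a2 * fst T ^ 2 + b2 * snd T ^ 2 = r ^ 4.
Proof.
  intros ha hb hr hXY hX hY htan hTX hTY.
  pose proof (line_tangent_ellipse_discr _ _ _ _ ha hb hXY htan) as hdiscr.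
  destruct (circle_tangents_meet r X Y T hr hXY hX hY hTX hTY) as [hk [k1 k2]].
  set (k := fst X * (snd Y - snd X) - snd X * (fst Y - fst X)) in *.
  apply (Rmult_eq_reg_l (k ^ 2)); [| now apply pow_nonzero].
  replace (k ^ 2 * (a2 * fst T ^ 2 + b2 * snd T ^ 2))
    with (a2 * (k * fst T) ^ 2 + b2 * (k * snd T) ^ 2) by ring.
  rewrite k1, k2, <- hdiscr; ring.
Qed.

Lemma on_ellipse_reciprocal (a2 b2 r : R) (T : point) :
  0 < a2 -> 0 < b2 -> r <> 0 ->
  a2 * fst T ^ 2 + b2 * snd T ^ 2 = r ^ 4 -> on_ellipse (r ^ 4 / a2) (r ^ 4 / b2) T.
Proof.
  intros ha hb hr hT; unfold on_ellipse.
  assert (r ^ 4 <> 0) by now apply pow_nonzero.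
  replace (fst T ^ 2 / (r ^ 4 / a2) + snd T ^ 2 / (r ^ 4 / b2))
    with ((a2 * fst T ^ 2 + b2 * snd T ^ 2) / r ^ 4) by (field; lra).
  rewrite hT; field; lra.
Qed.

Lemma pole_of_side_on_E (c r : R) (X Y T : point) :
  0 < r -> r <> c -> 0 <= c -> X <> Y -> on_circle r X -> on_circle r Y ->
  line_tangent_ellipse ((r ^ 2 + c ^ 2) ^ 2 / (4 * r ^ 2)) ((r ^ 2 - c ^ 2) ^ 2 / (4 * r ^ 2)) X Y ->
  on_circle_tangent X T -> on_circle_tangent Y T -> on_E c r T.
Proof.
  intros hr hrc hc hXY hX hY htan hTX hTY.
  assert (hrc2 : r ^ 2 - c ^ 2 <> 0).
  { replace (r ^ 2 - c ^ 2) with ((r - c) * (r + c)) by ring.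
    apply Rmult_integral_contrapositive; split; lra. }
  assert (ha : 0 < (r ^ 2 + c ^ 2) ^ 2 / (4 * r ^ 2)).
  { apply Rdiv_lt_0_compat; nra. }
  assert (hb : 0 < (r ^ 2 - c ^ 2) ^ 2 / (4 * r ^ 2)).
  { pose proof (Rsqr_pos_lt _ hrc2); unfold Rsqr in *.
    apply Rdiv_lt_0_compat; nra. }
  pose proof (pole_on_reciprocal_ellipse _ _ r X Y T ha hb (Rgt_not_eq _ _ hr) hXY hX hY htan hTX hTY) as hT.
  unfold on_E.
  replace (4 * r ^ 6 / (r ^ 2 + c ^ 2) ^ 2)
    with (r ^ 4 / ((r ^ 2 + c ^ 2) ^ 2 / (4 * r ^ 2))) by (field; nra).
  replace (4 * r ^ 6 / (r ^ 2 - c ^ 2) ^ 2)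
    with (r ^ 4 / ((r ^ 2 - c ^ 2) ^ 2 / (4 * r ^ 2))) by (field; lra).
  apply on_ellipse_reciprocal; lra.
Qed.

Theorem theorem5p10 (c r : R) (hc : 0 <= c) (hr : 0 < r) (hrc : r <> c)
  (hP : exists A B C : point, in_family c r A B C) :
  forall A B C : point, in_family c r A B C ->
    (forall T : point, on_circle_tangent B T -> on_circle_tangent C T -> on_E c r T) /\
    (forall T : point, on_circle_tangent C T -> on_circle_tangent A T -> on_E c r T) /\
    (forall T : point, on_circle_tangent A T -> on_circle_tangent B T -> on_E c r T).
Proof.
  intros A B C [hnd [hA [hB [hC [hBC [hCA hAB]]]]]].
  destruct (nondegenerate_neq A B C hnd) as [nAB [nBC nCA]].
  repeat split; intro T; apply (pole_of_side_on_E c r); assumption.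
Qed.
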